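(* Fix $T>0$ and $\Delta t>0$ with $n=T/\Delta t$ an integer. Let $\widetilde{\mathcal S}_{\Delta t}=\mathcal C_h\circ\mathcal B_h\circ\mathcal A_{\Delta t}\circ\mathcal B_h\circ\mathcal C_h$ ($h=\Delta t/2$) be the discrete split-encoder update with at-most-one-jump likelihood described in the context, and $\mathcal S_{\Delta t}$ the exact one-step filtering semigroup. Assume $L^1$-stability: there is $L\ge0$ such that $\|\mathcal S_{\Delta t}(q_1)-\mathcal S_{\Delta t}(q_2)\|_1\le(1+L\Delta t)\|q_1-q_2\|_1$ for all normalized densities $q_1,q_2$; and assume the intensity of observation jumps larger than $\varepsilon>0$ is uniformly bounded by $\Lambda_\varepsilon$, so that (as in the local error theorem) there are constants $C_1,C_2>0$ independent of $\Delta t$ with $\|\widetilde{\mathcal S}_{\Delta t}(q)-\mathcal S_{\Delta t}(q)\|_1\le C_1\Delta t^2+C_2(\Lambda_\varepsilon\Delta t)^2$ for every normalized density $q$. Then there exists $C_T>0$, independent of $\Delta t$, such that for every normalized density $q$, $$\|\widetilde{\mathcal S}^{\,n}_{\Delta t}(q)-\mathcal S^{\,n}_{\Delta t}(q)\|_1\le C_T(1+\Lambda_\varepsilon^2)\Delta t.$$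
   Context: Setting: a partially observed jump-diffusion $dX_t=\mu(t,X_t,\Theta_t)dt+\sigma(t,X_t,\Theta_t)dW^X_t+\int\gamma(t,z,X_{t^-},\Theta_t)\widetilde N^X(dt,dz)$, $d\Theta_t=a(t,\Theta_t)dt+b(t,\Theta_t)dW^\Theta_t+\int k(t,\Theta_{t^-},z)\widetilde N^\Theta(dt,dz)$ (Brownian motions $W^X,W^\Theta$, compensated Poisson measures with compensators $\nu^X(dz)dt,\nu^\Theta(dz)dt$); only $X$ is observed. $\mathcal S_{\Delta t}$ maps the normalized filter density (conditional law of $\Theta$ given the observation history) at $t_k$ to that at $t_k+\Delta t$ given the observed increment $\Delta X_k$. The discrete update on a latent grid $\{\theta_j\}$ with spacing $\Delta\theta$: $\mathcal A_{\Delta t}$ applies a nonnegative Markov transition kernel $K_{\Delta t}$ (discretizing the generator of $\Theta$) plus a zero-total-mass residual correction, clips negatives to zero and renormalizes; $\mathcal B_h$ multiplies by $\mathcal N(\Delta X_k;\mu_\phi h,\sigma_\phi^2h)$ and renormalizes; $\mathcal C_h$ multiplies by $e^{-\lambda_\phi h}\mathcal N(\Delta X_k;\mu_\phi h,\sigma_\phi^2 h)+he^{-\lambda_\phi h}\int\mathcal N(\Delta X_k;\mu_\phi h+\gamma_\phi(z),\sigma_\phi^2h)\nu^X(dz)$ and renormalizes, where $\mu_\phi,\sigma_\phi,\lambda_\phi,\gamma_\phi$ are given coefficient functions of $(t_k,X_{t_k},\beta_k,\theta_j)$ and $\mathcal N(x;m,v)$ is the Gaussian density. Powers $\mathcal S^n$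 denote $n$-fold composition. *)

From HB Require Import structures.
From mathcomp Require Import all_boot all_order all_algebra.
From mathcomp Require Import all_classical all_reals all_analysis.
Set Implicit Arguments. Unset Strict Implicit. Unset Printing Implicit Defensive.
Import Order.TTheory GRing.Theory Num.Theory.
Local Open Scope classical_set_scope.
Local Open Scope ring_scope.

Definition L1dist (R : realType) (d : measure_display) (X : measurableType d)
  (mu : {measure set X -> \bar R}) (f g : X -> R) : \bar R :=
  (\int[mu]_x (`|f x - g x|)%:E)%E.

Definition is_density (R : realType) (d : measure_display) (X : measurableType d)
  (mu : {measure set X -> \bar R}) (f : X -> R) : Prop :=
  [/\ measurable_fun setT f, (forall x, 0 <= f x) &
      (\int[mu]_x (f x)%:E = 1)%E].

From mathcomp Require Import all_boot all_order all_algebra.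
From mathcomp Require Import all_classical all_reals all_analysis.
From mathcomp Require Import ring lra measurable_realfun.
Set Implicit Arguments. Unset Strict Implicit.
Import Order.TTheory GRing.Theory Num.Theory.
Local Open Scope ring_scope.

(* Lady Windermere's fan: the global error after k steps is at most the sum
   of the k one-step errors, each transported to the final time by the exact
   scheme.  Stability bounds every transport by (1 + L dt) ^+ k <= expR (L T),
   so the n = T / dt local errors C1 dt^2 + C2 (Lam dt)^2 add up to O(dt). *)

Section ErrorPropagation.
Variables (R : realType) (A : Type) (dist : A -> A -> \bar R) (good : A -> Prop).
Variables (F G : A -> A) (M a : R).
Hypotheses (M_ge1 : 1 <= M) (a_ge0 : 0 <= a).
Hypothesis good_F : forall x, good x -> good (F x).
Hypothesis good_G : forall x, good x -> good (G x).
Hypothesis dist_xx : forall x, good x -> dist x x = 0%E.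
Hypothesis dist_triangle : forall x y z, good x -> good y -> good z ->
  (dist x z <= dist x y + dist y z)%E.
Hypothesis F_stable : forall x y, good x -> good y ->
  (dist (F x) (F y) <= M%:E * dist x y)%E.
Hypothesis G_consistent : forall x, good x -> (dist (G x) (F x) <= a%:E)%E.

Lemma good_iter (H : A -> A) k x : (forall y, good y -> good (H y)) ->
  good x -> good (iter k H x).
Proof. by move=> goodH gx; elim: k => [|k IHk] //=; apply: goodH. Qed.

Lemma dist_iter_le k x : good x ->
  (dist (iter k G x) (iter k F x) <= (k%:R * M ^+ k * a)%:E)%E.
Proof.
move=> gx; elim: k => [|k IHk] /=; first by rewrite mul0r mul0r dist_xx.
have gGk : good (iter k G x) by apply: good_iter.
have gFk : good (iter k F x) by apply: good_iter.
apply: le_trans (dist_triangle (good_G gGk) (good_F gGk) (good_F gFk)) _.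
apply: le_trans (leeD (G_consistent gGk) (F_stable gGk gFk)) _.
have M_ge0 : 0 <= M by apply: le_trans M_ge1.
apply: le_trans (leeD (lexx _) (lee_wpmul2l _ IHk)) _; first by rewrite lee_fin.
rewrite -EFinM -EFinD lee_fin.
have -> : M * (k%:R * M ^+ k * a) = k%:R * M ^+ k.+1 * a by rewrite exprS; ring.
rewrite -natr1 !mulrDl mul1r addrC lerD2l.
by rewrite ler_peMl // exprn_ege1.
Qed.

End ErrorPropagation.

Lemma exprn_1Dx_le_expR (R : realType) (x : R) (n : nat) :
  -1 <= x -> (1 + x) ^+ n <= expR (n%:R * x).
Proof.
move=> x_ge; rewrite expRM_natl.
apply: lerXn2r; rewrite ?nnegrE ?expR_ge0 ?expR_ge1Dx //; lra.
Qed.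

Lemma sum_local_errors_le (R : realType) (n : nat) (dt T L b : R) :
  0 <= dt -> 0 <= L -> 0 <= b -> n%:R * dt = T ->
  n%:R * (1 + L * dt) ^+ n * (b * dt ^+ 2) <= T * expR (L * T) * b * dt.
Proof.
move=> dt_ge0 L_ge0 b_ge0 ndt.
have Ldt_ge0 : 0 <= L * dt by rewrite mulr_ge0.
have growth : (1 + L * dt) ^+ n <= expR (L * T).
  by rewrite -ndt mulrCA exprn_1Dx_le_expR //; lra.
have -> : n%:R * (1 + L * dt) ^+ n * (b * dt ^+ 2) =
          (n%:R * dt * b * dt) * (1 + L * dt) ^+ n by ring.
have -> : T * expR (L * T) * b * dt = (T * b * dt) * expR (L * T) by ring.
by rewrite ndt ler_wpM2l // -ndt !mulr_ge0.
Qed.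

Section L1Distance.
Variables (R : realType) (d : measure_display) (X : measurableType d).
Variable mu : {measure set X -> \bar R}.

Lemma measurable_L1_integrand (f g : X -> R) :
  measurable_fun setT f -> measurable_fun setT g ->
  measurable_fun setT (fun x => (`|f x - g x|)%:E).
Proof.
move=> mf mg; apply/measurable_EFinP/measurableT_comp; first exact: normr_measurable.
exact: measurable_funB.
Qed.

Lemma L1dist_xx (f : X -> R) : L1dist mu f f = 0%E.
Proof. by apply: integral0_eq => x _; rewrite subrr normr0. Qed.

Lemma L1dist_triangle (f g h : X -> R) :
  measurable_fun setT f -> measurable_fun setT g -> measurable_fun setT h ->
  (L1dist mu f h <= L1dist mu f g + L1dist mu g h)%E.
Proof.
move=> mf mg mh; rewrite /L1dist -ge0_integralD //;
  try exact: measurable_L1_integrand.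
apply: ge0_le_integral => //; first exact: measurable_L1_integrand.
  by apply: emeasurable_funD; exact: measurable_L1_integrand.
move=> x _; rewrite lee_fin -[f x - h x](subrKA (g x)).
exact: ler_normD.
Qed.

End L1Distance.

Theorem corollary1 (R : realType) (d : measure_display) (X : measurableType d)
  (mu : {measure set X -> \bar R})
  (S St : R -> (X -> R) -> (X -> R))
  (T L C1 C2 Lam : R) :
  0 < T -> 0 <= L -> 0 < C1 -> 0 < C2 -> 0 <= Lam ->
  (forall dt q, 0 < dt -> is_density mu q -> is_density mu (S dt q)) ->
  (forall dt q, 0 < dt -> is_density mu q -> is_density mu (St dt q)) ->
  (forall dt q1 q2, 0 < dt -> is_density mu q1 -> is_density mu q2 ->
     (L1dist mu (S dt q1) (S dt q2) <= (1 + L * dt)%:E * L1dist mu q1 q2)%E) ->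
  (forall dt q, 0 < dt -> is_density mu q ->
     (L1dist mu (St dt q) (S dt q) <= (C1 * dt ^+ 2 + C2 * (Lam * dt) ^+ 2)%:E)%E) ->
  exists CT : R, 0 < CT /\
    forall (dt : R) (n : nat), 0 < dt -> n%:R * dt = T ->
    forall q, is_density mu q ->
      (L1dist mu (iter n (St dt) q) (iter n (S dt) q)
         <= (CT * (1 + Lam ^+ 2) * dt)%:E)%E.
Proof.
move=> T_gt0 L_ge0 C1_gt0 C2_gt0 _ S_dens St_dens S_stable St_local.
exists (T * expR (L * T) * (C1 + C2)); split.
  by rewrite !mulr_gt0 ?expR_gt0 ?addr_gt0.
move=> dt n dt_gt0 ndt q q_dens.
have M_ge1 : 1 <= 1 + L * dt by rewrite lerDl mulr_ge0 // ltW.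
have a_ge0 : 0 <= C1 * dt ^+ 2 + C2 * (Lam * dt) ^+ 2.
  by rewrite addr_ge0 // mulr_ge0 ?sqr_ge0 // ltW.
have density_triangle f g h :
    is_density mu f -> is_density mu g -> is_density mu h ->
    (L1dist mu f h <= L1dist mu f g + L1dist mu g h)%E.
  by move=> [mf _ _] [mg _ _] [mh _ _]; exact: L1dist_triangle.
apply: le_trans (dist_iter_le M_ge1 a_ge0 (fun p => S_dens dt p dt_gt0)
  (fun p => St_dens dt p dt_gt0) (fun f _ => L1dist_xx mu f) density_triangle
  (fun p1 p2 => S_stable dt p1 p2 dt_gt0) (fun p => St_local dt p dt_gt0)
  n q_dens) _.
have jump_term : C1 + C2 * Lam ^+ 2 <= (C1 + C2) * (1 + Lam ^+ 2) by nra.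
rewrite lee_fin exprMn [C2 * _]mulrA -mulrDl.
apply: le_trans (sum_local_errors_le (ltW dt_gt0) L_ge0 _ ndt) _.
  by rewrite (addr_ge0 (ltW C1_gt0)) // mulr_ge0 ?sqr_ge0 // ltW.
apply: ler_wpM2r; first exact: ltW.
rewrite -[X in _ <= X]mulrA.
by apply: ler_wpM2l => //; rewrite mulr_ge0 ?expR_ge0 // ltW.
Qed.
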